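(* Consider the real-time transmission decision problem described in the context. Suppose that at time slot $i$ the sensor has $N\ge1$ battery units and $n\ge 1$ target measurements remaining, the sensed data has valuation $x_i$, the instantaneous channel gain is $h_i$ (giving success probability $\mathcal{P}_s^i$), and the utility achieved by the base station on successful reception is $U(x_i)$. Then it is optimal for the sensor to transmit the data if and only if $x_i\ge a_N^n$, where \[ a_N^n = U^{-1}\Bigg[\frac{1-\pi}{\mathcal{P}_s^i}\,\mathbb{E}[V(N,n-1)-V(N-1,n-1)] + \frac{\pi}{\mathcal{P}_s^i}\,\mathbb{E}[V(N+1,n-1)-V(N,n-1)]\Bigg]. \]
   Context: An IoT sensor operates in discrete time slots. At the start of each slot $i$ a piece of sensed data with valuation $x_i\in\mathbb{R}^+$ is generated; the valuations are i.i.d. with density $f_X$ and cdf $F_X$. The channel gain $h_i$ in slot $i$ is i.i.d. exponential with mean $\mu^{-1}$ (Rayleigh fading), and is observed by the sensor; the probability that a transmission in slot $i$ is successfully received is $\mathcal{P}_s^i=\alpha_1$ if $h_i\ge\rho_{\text{th}}$ and $\mathcal{P}_s^i=\alpha_0$ if $h_i<\rho_{\text{th}}$, where $\alpha_0,\alpha_1\in(0,1]$. A utility $U(x_i)$ is obtained by the base station when data of valuation $x_i$ is successfully received, where $U:\mathbb{R}\to\mathbb{R}$ is monotonically increasing and invertible. In each slot, after observing $x_i$ and $\mathcal{P}_s^i$, the sensor decides either to transmit (consuming one battery unit, which requires at least one unit available, and earning expected utility $U(x_i)\mathcal{P}_s^i$) or to discard the data (earning zero). After the decision, one unit of energy is harvested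 with probability $\pi\in[0,1]$, independently across slots. Thus from state ($N$ units, $n$ measurements remaining), transmitting leads to ($N$, $n-1$) w.p. $\pi$ and ($N-1$, $n-1$) w.p. $1-\pi$, while discarding leads to ($N+1$, $n-1$) w.p. $\pi$ and ($N$, $n-1$) w.p. $1-\pi$. Once the battery is completely depleted (0 units) the sensor shuts down and earns nothing further. The sensor seeks to maximize the expected total utility $\mathbb{E}[\sum_k U(x_k)\mathcal{P}_s^k y_k]$ where $y_k\in\{0,1\}$ is the transmit decision in slot $k$. $V(N,n)$ denotes the maximum expected total utility obtainable over the remaining $n$ slots starting with $N$ battery units, given the observed current $x_i$ and $\mathcal{P}_s^i$; $\mathbb{E}[V(N,n)]$ denotes its expectation over the current slot's valuation and channel state, with $\mathbb{E}[V(N,0)]=0$ and $\mathbb{E}[V(0,n)]=0$. *)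

From HB Require Import structures.
From mathcomp Require Import all_boot all_order all_algebra.
From mathcomp Require Import all_classical all_reals all_analysis.
Set Implicit Arguments. Unset Strict Implicit. Unset Printing Implicit Defensive.
Import Order.TTheory GRing.Theory Num.Theory.
Import numFieldNormedType.Exports.
Local Open Scope classical_set_scope.
Local Open Scope ring_scope.

Section Model.
Variable R : realType.
(* fX : density of the valuation x on R^+ ; U : utility ;
   a0 a1 : success probabilities (alpha_0, alpha_1) ; rho : threshold rho_th ;
   mu : rate of the exponential channel gain (mean 1/mu) ; p : harvest prob. pi *)
Variables (fX U : R -> R) (a0 a1 rho mu p : R).

Definition succ_prob (h : R) : R := if rho <= h then a1 else a0.

Definition Ex (g : R -> R) : R :=
  \int[lebesgue_measure]_(x in `[0%R, +oo[) (g x * fX x).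

Definition Eh (g : R -> R) : R :=
  \int[lebesgue_measure]_(h in `[0%R, +oo[) (mu * expR (- (mu * h)) * g h).

Definition Exh (g : R -> R -> R) : R := Eh (fun h => Ex (fun x => g x h)).

(* Dynamic programming: EV n N = E[V(N,n)], given EVprev = E[V(., n-1)] *)
Definition Qtx (EVprev : nat -> R) (N : nat) (x P : R) : R :=
  U x * P + p * EVprev N + (1 - p) * EVprev N.-1.
Definition Qdisc (EVprev : nat -> R) (N : nat) : R :=
  p * EVprev N.+1 + (1 - p) * EVprev N.

Definition Vstep (EVprev : nat -> R) (N : nat) (x P : R) : R :=
  if N is 0 then 0 else Num.max (Qtx EVprev N x P) (Qdisc EVprev N).

Fixpoint EVfun (n : nat) : nat -> R :=
  match n with
  | 0 => fun _ => 0
  | n'.+1 => fun N =>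
      if N is 0 then 0
      else Exh (fun x h => Vstep (EVfun n') N x (succ_prob h))
  end.

Definition EV (N n : nat) : R := EVfun n N.

Definition V (N n : nat) (x P : R) : R :=
  if n is n'.+1 then Vstep (EVfun n') N x P else 0.

Definition transmit_optimal (N n : nat) (x P : R) : Prop :=
  if n is n'.+1 then (0 < N)%N /\ Qtx (EVfun n') N x P = V N n x P else False.

End Model.

From HB Require Import structures.
From mathcomp Require Import all_boot all_order all_algebra.
From mathcomp Require Import all_classical all_reals all_analysis.
From mathcomp Require Import ring.
Import Order.TTheory GRing.Theory Num.Theory.
Import numFieldNormedType.Exports.
Local Open Scope classical_set_scope.
Local Open Scope ring_scope.

(* Bellman's equation compares transmitting, worth U(x) P plus the expected
   future value with one unit of energy less, against discarding.  Their
   difference is U(x) P minus the expected marginal value of one battery unit,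
   so transmitting is optimal exactly when U(x) exceeds that marginal value
   divided by P > 0; inverting the increasing U gives the threshold on x. *)

Section Threshold.
Variables (R : realType) (U : R -> R) (p : R).

Definition marginal_energy_value (EVprev : nat -> R) (N : nat) : R :=
  (1 - p) * (EVprev N - EVprev N.-1) + p * (EVprev N.+1 - EVprev N).

Lemma Qtx_subr_Qdisc (EVprev : nat -> R) (N : nat) (x P : R) :
  Qtx U p EVprev N x P - Qdisc p EVprev N
  = U x * P - marginal_energy_value EVprev N.
Proof. by rewrite /Qtx /Qdisc /marginal_energy_value; ring. Qed.

Lemma Qdisc_le_Qtx (EVprev : nat -> R) (N : nat) (x P : R) : 0 < P ->
  (Qdisc p EVprev N <= Qtx U p EVprev N x P)
  = (marginal_energy_value EVprev N / P <= U x).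
Proof.
by move=> P_gt0; rewrite -subr_ge0 Qtx_subr_Qdisc subr_ge0 ler_pdivrMr.
Qed.

End Threshold.

Lemma succ_prob_gt0 (R : realType) (a0 a1 rho h : R) :
  0 < a0 -> 0 < a1 -> 0 < succ_prob a0 a1 rho h.
Proof. by move=> a0_gt0 a1_gt0; rewrite /succ_prob; case: ifP. Qed.

Lemma transmit_optimalE (R : realType) (fX U : R -> R) (a0 a1 rho mu p : R)
    (N n : nat) (x P : R) : (0 < N)%N ->
  let EVprev := EVfun fX U a0 a1 rho mu p n in
  transmit_optimal fX U a0 a1 rho mu p N n.+1 x P
  <-> Qdisc p EVprev N <= Qtx U p EVprev N x P.
Proof.
case: N => // N _ EVprev; rewrite /transmit_optimal /V /Vstep.
split=> [[_ /esym/max_idPl] | /max_idPl/esym] //.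
Qed.

Theorem theorem1 (R : realType) (fX U Uinv : R -> R) (a0 a1 rho mu p : R)
  (hfX0 : forall x, 0 <= fX x)
  (hfXm : measurable_fun setT fX)
  (hfX1 : (\int[lebesgue_measure]_(x in `[0%R, +oo[) (fX x)%:E = 1)%E)
  (hU : forall x y, x < y -> U x < U y)
  (hUK : cancel U Uinv) (hUinvK : cancel Uinv U)
  (ha0 : 0 < a0 <= 1) (ha1 : 0 < a1 <= 1)
  (hmu : 0 < mu) (hp : 0 <= p <= 1)
  (N n : nat) (hN : (1 <= N)%N) (hn : (1 <= n)%N)
  (x h : R) (hx : 0 <= x) (hh : 0 <= h) :
  let P := succ_prob a0 a1 rho h in
  let EVm := EV fX U a0 a1 rho mu p in
  transmit_optimal fX U a0 a1 rho mu p N n x P <->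
  x >= Uinv ((1 - p) / P * (EVm N n.-1 - EVm N.-1 n.-1)
             + p / P * (EVm N.+1 n.-1 - EVm N n.-1)).
Proof.
move=> P EVm.
have P_gt0 : 0 < P.
  by case/andP: ha0 => a0_gt0 _; case/andP: ha1 => a1_gt0 _; exact: succ_prob_gt0.
case: n hn => // n _; rewrite transmit_optimalE // Qdisc_le_Qtx //.
rewrite -[_ <= x](le_mono hU) hUinvK /EVm /EV /marginal_energy_value.
by rewrite mulrDl mulrAC (mulrAC p).
Qed.
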